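(* Let $p\ge 3$ and let $F_p$ be the plane graph defined below, with outer cycle $C = u_0u_1\cdots u_{p-1}u_0$. Then: (a) $F_p$ is $5$-connected; (b) for every vertex $u$ of $F_p$ and every set $M\subseteq V(C)$ with $|M|\le 5$, $F_p$ contains $|M|$ paths from $u$ to the vertices of $M$ (one ending at each vertex of $M$) any two of which share only $u$; (c) for any two sets $M_1, M_2\subseteq V(C)$ with $|M_1|=|M_2|\le 5$, $F_p$ contains $|M_1|$ pairwise vertex-disjoint paths from $M_1$ to $M_2$.
   Context: For $p\ge 3$, $F_p$ is the plane graph constructed as follows. Take a cycle $C = u_0u_1\cdots u_{p-1}u_0$ of length $p$. Inside $C$ add a cycle $C' = v_0v_1\cdots v_{2p-1}v_0$ of length $2p$ and the edges $u_iv_{2i-1}, u_iv_{2i}, u_iv_{2i+1}$ for $i=0,\dots,p-1$ (indices of $u$ taken modulo $p$, indices of $v$ modulo $2p$). Inside $C'$ add a cycle $C''=w_0w_1\cdots w_{2p-1}w_0$ of length $2p$ and edges $v_iw_i, v_iw_{i+1}$ for $i=0,\dots,2p-1$ (indices modulo $2p$). Inside $C''$ add a new vertex $z$ adjacent to every vertex of $C''$. A graph is $k$-connected if it has more than $k$ vertices and remains connected after deleting any fewer than $k$ vertices. *)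

From mathcomp Require Import all_boot.
Set Implicit Arguments. Unset Strict Implicit. Unset Printing Implicit Defensive.

(* Vertex type of F_p:  u_i (i < p), v_j (j < 2p), w_j (j < 2p), z. *)
Definition Fvert (p : nat) : finType :=
  ((('I_p + 'I_(2 * p)) + 'I_(2 * p)) + unit)%type.

Definition uu {p} (i : 'I_p) : Fvert p := inl (inl (inl i)).
Definition vv {p} (j : 'I_(2 * p)) : Fvert p := inl (inl (inr j)).
Definition ww {p} (j : 'I_(2 * p)) : Fvert p := inl (inr j).
Definition zz {p} : Fvert p := inr tt.

(* one-directional edge list of F_p *)
Definition Fadj0 (p : nat) (a b : Fvert p) : bool :=
  match a, b with
  | inl (inl (inl i)), inl (inl (inl j)) => j == (i + 1) %% p :> nat        (* u_i u_{i+1} *)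
  | inl (inl (inr i)), inl (inl (inr j)) => j == (i + 1) %% (2 * p) :> nat  (* v_i v_{i+1} *)
  | inl (inr i), inl (inr j) => j == (i + 1) %% (2 * p) :> nat              (* w_i w_{i+1} *)
  | inl (inl (inl i)), inl (inl (inr j)) =>                                 (* u_i v_{2i-1}, v_{2i}, v_{2i+1} *)
      [|| j == (2 * i + 2 * p - 1) %% (2 * p) :> nat,
          j == (2 * i) %% (2 * p) :> nat
        | j == (2 * i + 1) %% (2 * p) :> nat]
  | inl (inl (inr i)), inl (inr j) =>                                       (* v_i w_i, v_i w_{i+1} *)
      (j == i :> nat) || (j == (i + 1) %% (2 * p) :> nat)
  | inl (inr _), inr _ => true                                              (* w_j z *)
  | _, _ => false
  end.

Definition Fadj (p : nat) : rel (Fvert p) := fun a b => Fadj0 a b || Fadj0 b a.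

Definition onC {p} (x : Fvert p) : bool :=
  match x with inl (inl (inl _)) => true | _ => false end.

Definition delV (T : finType) (e : rel T) (S : {set T}) : rel T :=
  fun a b => [&& a \notin S, b \notin S & e a b].

Definition k_connected (T : finType) (e : rel T) (k : nat) : Prop :=
  k < #|T| /\
  forall S : {set T}, #|S| < k ->
    forall x y, x \notin S -> y \notin S -> connect (delV e S) x y.

Definition is_path (T : finType) (e : rel T) (x : T) (s : seq T) (y : T) : bool :=
  [&& path e x s, last x s == y & uniq (x :: s)].

From mathcomp Require Import all_boot zify.
From Stdlib Require Import Classical.
Set Implicit Arguments. Unset Strict Implicit. Unset Printing Implicit Defensive.

(* Parts (b) and (c) hold in every 5-connected graph and for arbitrary vertex
   sets of size at most 5; they follow from Menger's theorem.
   The main theorem combines 3 with 2. *)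

Section Menger.
Variable T : finType.
Implicit Types (V A B X Y S W : {set T}) (e : rel T).

Definition rV V e : rel T := fun a b => [&& a \in V, b \in V & e a b].

Definition ABpath V e A B x s :=
  [&& x \in A, x \in V, path (rV V e) x s, last x s \in B & uniq (x :: s)].

Definition sep V e A B S :=
  forall x s, ABpath V e A B x s -> exists2 y, y \in x :: s & y \in S.

Definition disjoint_paths (A0 : {set T}) (P : T -> seq T) :=
  forall a1 a2 y, a1 \in A0 -> a2 \in A0 -> a1 != a2 ->
    y \in a1 :: P a1 -> y \in a2 :: P a2 -> False.

Definition linkage V e A B k := exists A0 : {set T}, exists P : T -> seq T,
  [/\ A0 \subset A, #|A0| = k, (forall a, a \in A0 -> ABpath V e A B a (P a)) &
      disjoint_paths A0 P].

Definition edges V e := [set ab : T * T | rV V e ab.1 ab.2].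

(* Induction measure for Menger's theorem: number of vertices plus edges. *)
Definition msr V e := #|V| + #|edges V e|.

Lemma mem_tail (x y : T) s : x \in s -> x \in y :: s.
Proof. by rewrite inE => ->; rewrite orbT. Qed.

Lemma path_rV_sub V e x s : path (rV V e) x s -> x \in V ->
  forall y, y \in x :: s -> y \in V.
Proof.
elim: s x => [|z s IH] x /=; first by move=> _ xV y; rewrite mem_seq1 => /eqP->.
move=> /andP[/and3P[_ zV _] pz] xV y; rewrite inE => /orP[/eqP->//|]; exact: IH.
Qed.

Lemma ABpath_in V e A B x s y : ABpath V e A B x s -> y \in x :: s -> y \in V.
Proof. by case/and5P=> _ xV p _ _; apply: (path_rV_sub p xV). Qed.

Lemma rV_mono W1 W2 e : W1 \subset W2 -> subrel (rV W1 e) (rV W2 e).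
Proof. by move=> sW a b /and3P[a1 b1 ab]; rewrite /rV (subsetP sW _ a1) (subsetP sW _ b1). Qed.

Lemma rV_sym V e : symmetric e -> symmetric (rV V e).
Proof. by move=> esym a b; rewrite /rV esym andbCA. Qed.

Lemma edges_mono W1 W2 e : W1 \subset W2 -> #|edges W1 e| <= #|edges W2 e|.
Proof.
move=> sW; apply: subset_leq_card; apply/subsetP => ab; rewrite !inE.
exact: rV_mono.
Qed.

Lemma ABpath_sub V e e' A B x s : subrel e e' -> ABpath V e A B x s -> ABpath V e' A B x s.
Proof.
move=> ee /and5P[xA xV p lB u]; apply/and5P; split=> //.
by apply: sub_path p => a b /and3P[aV bV /ee eab]; rewrite /rV aV bV eab.
Qed.

Lemma rev_cons_belast (x : T) s : last x s :: rev (belast x s) = rev (x :: s).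
Proof. by rewrite [x :: s]lastI rev_rcons. Qed.

Lemma ABpath_rev V e A B x s : symmetric e -> ABpath V e A B x s ->
  ABpath V e B A (last x s) (rev (belast x s)).
Proof.
move=> esym hp; move: (hp) => /and5P[xA xV px lB ux].
apply/and5P; split => //.
- by apply: (ABpath_in hp); apply: mem_last.
- rewrite rev_path; apply: sub_path px => a b /and3P[aV bV ab].
  by rewrite /rV aV bV esym.
- by rewrite -(last_cons x) rev_cons_belast rev_cons last_rcons.
- by rewrite rev_cons_belast rev_uniq.
Qed.

Lemma sep_sym V e A B S : symmetric e -> sep V e A B S -> sep V e B A S.
Proof.
move=> esym sS x s hp; have [y yin yS] := sS _ _ (ABpath_rev esym hp).
exists y => //; move: yin.
by rewrite rev_cons_belast mem_rev.
Qed.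

Lemma sep_B V e A B : sep V e A B B.
Proof. by move=> x s /and5P[_ _ _ lB _]; exists (last x s) => //; apply: mem_last. Qed.

Lemma split_first X (a : T) s : has (fun u => u \in X) (a :: s) ->
  exists t s2, [/\ s = t ++ s2, last a t \in X & all (fun u => u \notin X) (belast a t)].
Proof.
elim: s a => [|c s IH] a /=; first by rewrite orbF => aX; exists [::], [::].
case aX: (a \in X) => /= h; first by exists [::], (c :: s).
have [t [s2 [-> lt bt]]] := IH c h.
by exists (c :: t), s2; split => //=; rewrite aX.
Qed.

Lemma prefix_connect V e X a t : path (rV V e) a t ->
  all (fun u => u \notin X) (belast a t) -> a \in V ->
  forall u, u \in belast a t -> connect (rV (V :\: X) e) a u.
Proof.
elim: t a => [|c t IH] a //= /andP[/and3P[_ cV ac] pc] /andP[aX al] aV u.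
rewrite inE => /orP[/eqP->|ub]; first exact: connect0.
case: t IH pc al ub => [|d t] IH pc al //= ub.
move: al => /= /andP[cX al'].
apply: connect_trans (IH c pc _ cV u ub); last by rewrite /= cX.
by apply: connect1; rewrite /rV !inE aX cX aV cV ac.
Qed.

Lemma belast_head (x u : T) t : u \in belast x t -> x \in belast x t.
Proof. by case: t => //= c t _; rewrite inE eqxx. Qed.

Definition lend (P : T -> seq T) (a : T) := last a (P a).

Lemma lend_inj A0 P : disjoint_paths A0 P -> {in A0 &, injective (lend P)}.
Proof.
move=> dP a1 a2 h1 h2 E; case: (eqVneq a1 a2) => // ne; exfalso.
apply: (dP a1 a2 (lend P a1) h1 h2 ne (mem_last _ _)); rewrite E; exact: mem_last.
Qed.

Lemma lend_onto A0 P B : disjoint_paths A0 P -> (forall a, a \in A0 -> lend P a \in B) ->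
  #|A0| = #|B| -> lend P @: A0 = B.
Proof.
move=> dP enB cA; apply/eqP; rewrite eqEcard card_in_imset -?cA ?leqnn ?andbT;
  last exact: lend_inj.
by apply/subsetP => y /imsetP[a aA0 ->]; apply: enB.
Qed.

Lemma lend_unique A0 P B a y : disjoint_paths A0 P ->
  (forall a, a \in A0 -> lend P a \in B) -> #|A0| = #|B| ->
  a \in A0 -> y \in a :: P a -> y \in B -> y = lend P a.
Proof.
move=> dP enB cA aA0 yin; rewrite -(lend_onto dP enB cA) => /imsetP[a' a'A0 Ey].
subst y; case: (eqVneq a a') => [->//|ne]; exfalso.
exact: (dP a a' _ aA0 a'A0 ne yin (mem_last _ _)).
Qed.

Lemma start_unique A0 P a y : disjoint_paths A0 P ->
  a \in A0 -> y \in a :: P a -> y \in A0 -> y = a.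
Proof.
move=> dP aA0 yin yA0; case: (eqVneq y a) => // ne; exfalso.
by apply: (dP a y y aA0 yA0 _ yin (mem_head _ _)); rewrite eq_sym.
Qed.

Section Glue.
Variables (V V1 V2 A X B A0 : {set T}) (e : rel T) (P1 P2 : T -> seq T).
Hypotheses (sV1 : V1 \subset V) (sV2 : V2 \subset V)
  (cap : forall y, y \in V1 -> y \in V2 -> y \in X) (A0X : #|A0| = #|X|)
  (hP1 : forall a, a \in A0 -> ABpath V1 e A X a (P1 a)) (dP1 : disjoint_paths A0 P1)
  (hP2 : forall q, q \in X -> ABpath V2 e X B q (P2 q)) (dP2 : disjoint_paths X P2).

Let en := lend P1.
Let Q a := P1 a ++ P2 (en a).

Let en_X a : a \in A0 -> en a \in X.
Proof. by move/hP1/and5P => []. Qed.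

Let meet a q y : a \in A0 -> q \in X ->
  y \in a :: P1 a -> y \in q :: P2 q -> y = en a /\ y = q.
Proof.
move=> aA0 qX y1 y2.
have yX : y \in X := cap (ABpath_in (hP1 aA0) y1) (ABpath_in (hP2 qX) y2).
by split; [exact: (lend_unique dP1 en_X A0X aA0 y1 yX) | exact: (start_unique dP2 qX y2 yX)].
Qed.

Lemma glue_path a : a \in A0 -> ABpath V e A B a (Q a).
Proof.
move=> aA0; have := hP1 aA0 => /and5P[aA aV1 p1 _ u1].
have := hP2 (en_X aA0) => /and5P[_ _ p2 l2 u2].
apply/and5P; split => //.
- exact: subsetP sV1 a aV1.
- rewrite cat_path (sub_path (rV_mono (e:=e) sV1) p1).
  exact: (sub_path (rV_mono (e:=e) sV2) p2).
- by rewrite last_cat.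
- rewrite -cat_cons cat_uniq u1 /=; move: u2 => /= /andP[nin ->]; rewrite andbT.
  apply/hasPn => y yP2; apply/negP => yP1.
  have [Ey _] := meet aA0 (en_X aA0) yP1 (mem_tail _ yP2).
  by move: yP2; rewrite Ey (negbTE nin).
Qed.

Lemma glue_disjoint : disjoint_paths A0 Q.
Proof.
move=> a1 a2 y h1 h2 ne.
have ene : en a1 != en a2 by apply: contra ne => /eqP/(lend_inj dP1 h1 h2) ->.
rewrite -!cat_cons !mem_cat => /orP[y1|y1] /orP[y2|y2].
- exact: (dP1 h1 h2 ne y1 y2).
- have [E1 E2] := meet h1 (en_X h2) y1 (mem_tail _ y2).
  by rewrite -E1 E2 eqxx in ene.
- have [E1 E2] := meet h2 (en_X h1) y2 (mem_tail _ y1).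
  by rewrite -E1 E2 eqxx in ene.
- exact: (dP2 (en_X h1) (en_X h2) ene (mem_tail _ y1) (mem_tail _ y2)).
Qed.

End Glue.

(* Gluing lemma, packaged in terms of linkages; the X--B linkage necessarily
   starts at all of X. *)
Lemma linkage_glue V V1 V2 e A X B k : V1 \subset V -> V2 \subset V ->
  (forall y, y \in V1 -> y \in V2 -> y \in X) -> #|X| = k ->
  linkage V1 e A X k -> linkage V2 e X B k -> linkage V e A B k.
Proof.
move=> sV1 sV2 cap Xk [A0 [P1 [A0A A0k hP1 dP1]]] [X0 [P2 [X0X X0k hP2 dP2]]].
have X0E : X0 = X by apply/eqP; rewrite eqEcard X0X Xk X0k leqnn.
subst X0; have A0X : #|A0| = #|X| by rewrite A0k Xk.
exists A0, (fun a => P1 a ++ P2 (lend P1 a)); split => //.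
- by move=> a; apply: (glue_path sV1 sV2 cap A0X hP1 dP1 hP2 dP2).
- exact: (glue_disjoint cap A0X hP1 dP1 hP2 dP2).
Qed.

Lemma outside_sep V e A B X k : (forall S, sep V e A B S -> k <= #|S|) ->
  #|X| = k -> X != B -> exists2 b, b \in B & b \notin X.
Proof.
move=> Hk Xk XB; case: (boolP (B \subset X)) => [BX|/subsetPn[b bB bX]]; last by exists b.
have := Hk _ (@sep_B V e A B); rewrite -Xk => BXc.
by move: XB; rewrite eq_sym eqEcard BX BXc.
Qed.

Section Sides.
Variables (V X : {set T}) (e : rel T).
Hypotheses (esym : symmetric e) (XV : X \subset V).

Definition reach (Y : {set T}) :=
  [set v | [exists a, [&& a \in Y, a \in V :\: X & connect (rV (V :\: X) e) a v]]].
Definition side (Y : {set T}) := X :|: reach Y.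

Lemma reach_sub Y v : v \in reach Y -> v \in V :\: X.
Proof.
rewrite inE => /existsP[a /and3P[_ aW /connectP[s ps ->]]].
exact: (path_rV_sub ps aW (mem_last _ _)).
Qed.

Lemma side_sub Y : side Y \subset V.
Proof.
apply/subsetP => v; rewrite in_setU => /orP[/(subsetP XV)//|/reach_sub].
by rewrite in_setD => /andP[].
Qed.

Lemma source_side Y : Y \subset V -> Y \subset side Y.
Proof.
move=> YV; apply/subsetP => a aY; rewrite in_setU; case aX: (a \in X) => //=.
rewrite inE; apply/existsP; exists a.
by rewrite aY connect0 andbT in_setD aX (subsetP YV a aY).
Qed.

Lemma sep_no_walk A B a b : A \subset V -> sep V e A B X ->
  a \in A -> a \in V :\: X -> b \in B -> connect (rV (V :\: X) e) a b -> False.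
Proof.
move=> AV sX aA aW bB /connectP[s ps Eb]; move: bB; rewrite Eb.
case: (shortenP ps) => s' ps' us' _ lB.
have hp : ABpath V e A B a s'.
  apply/and5P; split => //; first exact: subsetP AV a aA.
  exact: (sub_path (rV_mono (e:=e) (subsetDl V X)) ps').
have [y yin yX] := sX a s' hp.
by move: (path_rV_sub ps' aW yin); rewrite in_setD yX.
Qed.

Lemma side_cap A B y : A \subset V -> sep V e A B X ->
  y \in side A -> y \in side B -> y \in X.
Proof.
move=> AV sX; rewrite !in_setU; case yX: (y \in X) => //=.
rewrite !inE => /existsP[a /and3P[aA aW ca]] /existsP[b /and3P[bB bW cb]].
exfalso; apply: (sep_no_walk AV sX aA aW bB); apply: connect_trans ca _.
by rewrite (sym_connect_sym (rV_sym _ esym)).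
Qed.

(* A vertex of B outside X is missing from the A-side, which is therefore
   a strictly smaller instance. *)
Lemma side_smaller A B b : A \subset V -> B \subset V -> sep V e A B X ->
  b \in B -> b \notin X -> msr (side A) e < msr V e.
Proof.
move=> AV BV sX bB bX; rewrite /msr -addSn leq_add ?edges_mono ?side_sub //.
apply: proper_card; apply/properP; split; first exact: side_sub.
exists b; first exact: subsetP BV b bB.
rewrite in_setU negb_or bX /= inE; apply/existsP => -[a /and3P[aA aW ca]].
exact: (sep_no_walk AV sX aA aW bB ca).
Qed.

(* An A--X separator of the A-side is an A--B separator of V, so the lower
   bound k on A--B separators carries over to the A-side. *)
Lemma side_sep A B k : sep V e A B X ->
  (forall S, sep V e A B S -> k <= #|S|) -> forall S, sep (side A) e A X S -> k <= #|S|.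
Proof.
move=> sX Hk S sS; apply: Hk => x s hp.
have [y yin yX] := sX x s hp.
have [t [s2 [Es lt bt]]] : exists t s2, [/\ s = t ++ s2, last x t \in X &
    all (fun u => u \notin X) (belast x t)] by apply: split_first; apply/hasP; exists y.
move: hp => /and5P[xA xV px lB ux].
have pt : path (rV V e) x t by move: px; rewrite Es cat_path => /andP[].
have ut : uniq (x :: t) by move: ux; rewrite Es -cat_cons cat_uniq => /andP[].
have in_side u : u \in x :: t -> u \in side A.
  rewrite lastI mem_rcons inE => /orP[/eqP->|ub]; first by rewrite in_setU lt.
  have xX : x \notin X := allP bt x (belast_head ub).
  rewrite in_setU; apply/orP; right; rewrite inE; apply/existsP; exists x.
  by rewrite xA in_setD xX xV /=; apply: prefix_connect pt bt xV u ub.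
have hp' : ABpath (side A) e A X x t.
  apply/and5P; split => //; first exact: in_side x (mem_head _ _).
  apply: (@sub_in_path _ (fun u => u \in side A) (rV V e)) pt; last by apply/allP.
  by move=> c d cA dA /and3P[_ _ cd]; rewrite /rV cA dA cd.
have [z zin zS] := sS x t hp'.
by exists z => //; rewrite Es -cat_cons mem_cat zin.
Qed.

End Sides.

Definition menger_below k n := forall V e A B, msr V e < n ->
  symmetric e -> irreflexive e -> A \subset V -> B \subset V ->
  (forall S, sep V e A B S -> k <= #|S|) -> linkage V e A B k.

(* A minimum separator X different from A and B splits the problem into two
   strictly smaller ones, whose linkages glue together along X. *)
Lemma menger_split V e A B X k : menger_below k (msr V e) ->
  symmetric e -> irreflexive e -> A \subset V -> B \subset V ->
  (forall S, sep V e A B S -> k <= #|S|) ->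
  X \subset V -> #|X| = k -> sep V e A B X -> X != A -> X != B -> linkage V e A B k.
Proof.
move=> IH esym eirr AV BV Hk XV Xk sX XA XB.
have sX' := sep_sym esym sX.
have Hk' S : sep V e B A S -> k <= #|S| by move/(sep_sym esym)/Hk.
have [b bB bX] := outside_sep Hk Xk XB.
have [a aA aX] := outside_sep Hk' Xk XA.
apply: (linkage_glue (side_sub e XV A) (side_sub e XV B) _ Xk).
- by move=> y; apply: (side_cap esym AV sX).
- apply: IH => //; first exact: (side_smaller XV AV BV sX bB bX).
  + exact: source_side.
  + exact: subsetUl.
  + exact: (side_sep sX Hk).
- apply: IH => //; first exact: (side_smaller XV BV AV sX' aA aX).
  + exact: subsetUl.
  + exact: source_side.
  + by move=> S /(sep_sym esym); apply: (side_sep sX' Hk').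
Qed.

Definition del_edge e (x y : T) : rel T :=
  fun a b => e a b && ~~ ((a == x) && (b == y) || (a == y) && (b == x)).

Lemma del_edge_sym e x y : symmetric e -> symmetric (del_edge e x y).
Proof.
move=> esym a b; rewrite /del_edge esym.
by case: (a == x); case: (b == y); case: (a == y); case: (b == x).
Qed.

Lemma del_edge_irr e x y : irreflexive e -> irreflexive (del_edge e x y).
Proof. by move=> eirr a; rewrite /del_edge eirr. Qed.

Lemma del_edge_sub e x y : subrel (del_edge e x y) e.
Proof. by move=> a b /andP[]. Qed.

Lemma del_edge_msr V e x y : rV V e x y -> msr V (del_edge e x y) < msr V e.
Proof.
move=> exy; rewrite /msr ltn_add2l; apply: proper_card; apply/properP; split.
  by apply/subsetP => ab; rewrite !inE /rV => /and3P[-> -> /andP[]].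
by exists (x, y); rewrite !inE /= ?exy // /rV /del_edge !eqxx /= !andbF.
Qed.

(* A path through neither end u of the deleted edge survives the deletion,
   so adding u to a separator of the smaller graph separates the graph. *)
Lemma del_edge_sep V e A B x y u S : (u == x) || (u == y) ->
  sep V (del_edge e x y) A B S -> sep V e A B (u |: S).
Proof.
move=> hu sS a s hp; case: (boolP (u \in a :: s)) => [uin|unin].
  by exists u; rewrite ?setU11.
suff /sS[z zin zS] : ABpath V (del_edge e x y) A B a s by exists z; rewrite ?setU1r.
move: hp => /and5P[aA aV pa la ua]; apply/and5P; split => //.
apply: (@sub_in_path _ (fun c => c != u) (rV V e)) pa; last first.
  by apply/allP => c cin; apply/eqP => E; rewrite -E cin in unin.
move=> c d cu du /and3P[cV dV cd]; rewrite /rV cV dV /del_edge cd /=.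
by case/orP: hu => /eqP Eu; subst u; rewrite (negbTE cu) (negbTE du) /= ?andbF.
Qed.

Lemma sep_restrict V e A B S : sep V e A B S -> sep V e A B (S :&: V).
Proof.
by move=> sS a s hp; have [z zin zS] := sS a s hp; exists z; rewrite // inE zS (ABpath_in hp zin).
Qed.

Lemma edge_linkage V e A B S x y k : rV V e x y -> x != y -> x \notin S -> y \notin S ->
  x |: S = A -> y |: S = B -> #|x |: S| = k -> S \subset V -> linkage V e A B k.
Proof.
move=> exy xy xS yS XA YB Xk SV.
have aS a : a \in x |: S -> a != x -> a \in S by rewrite in_setU1 => /orP[->|].
exists (x |: S), (fun a => if a == x then [:: y] else [::]); split => //.
- by rewrite XA.
- move=> a aX; case: (eqVneq a x) => [->|ax].
    case/and3P: (exy) => xV yV _; apply/and5P; split => //.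
    + by rewrite -XA setU11.
    + by rewrite /= exy.
    + by rewrite /= -YB setU11.
    + by rewrite /= inE andbT xy.
  have aS' := aS a aX ax; apply/and5P; split => //.
  + by rewrite -XA setU1r.
  + exact: subsetP SV a aS'.
  + by rewrite /= -YB setU1r.
- move=> a1 a2 z h1 h2 ne.
  case: (eqVneq a1 x) => [E1|a1x]; case: (eqVneq a2 x) => [E2|a2x].
  + by rewrite E1 E2 eqxx in ne.
  + have a2S := aS a2 h2 a2x; rewrite E1 !inE => /orP[] /eqP-> /eqP E.
      by rewrite E a2S in xS.
    by rewrite E a2S in yS.
  + have a1S := aS a1 h1 a1x; rewrite E2 !inE => /eqP-> /orP[] /eqP E.
      by rewrite -E a1S in xS.
    by rewrite -E a1S in yS.
  + by rewrite !mem_seq1 => /eqP-> /eqP E; rewrite E eqxx in ne.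
Qed.

(* Without edges, A :&: B separates A from B and its vertices are trivial paths. *)
Lemma menger_no_edge V e A B k : (forall a b, ~~ rV V e a b) -> A \subset V ->
  (forall S, sep V e A B S -> k <= #|S|) -> linkage V e A B k.
Proof.
move=> noe AV Hk.
have sAB : sep V e A B (A :&: B).
  move=> x s /and5P[xA xV px lB _]; exists x; first exact: mem_head.
  case: s px lB => [|c s] /=; first by move=> _ xB; rewrite inE xA xB.
  by rewrite (negbTE (noe x c)).
have [A0 A0AB A0k] : exists2 A0 : {set T}, A0 \subset A :&: B & #|A0| = k.
  exists [set x in take k (enum (A :&: B))].
    by apply/subsetP => x; rewrite inE => /mem_take; rewrite mem_enum.
  rewrite cardsE (card_uniqP _) ?size_takel -?cardE ?Hk //.
  exact/take_uniq/enum_uniq.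
exists A0, (fun _ => [::]); split => //.
- exact: subset_trans A0AB (subsetIl _ _).
- move=> a aA0; have := subsetP A0AB a aA0; rewrite inE => /andP[aA aB].
  by apply/and5P; split => //; exact: subsetP AV a aA.
- move=> a1 a2 y _ _ ne; rewrite !mem_seq1 => /eqP-> /eqP E.
  by rewrite E eqxx in ne.
Qed.

Lemma tight_sep V e A B S u k : (forall S, sep V e A B S -> k <= #|S|) ->
  sep V e A B (u |: S) -> #|S| < k -> #|u |: S| = k /\ u \notin S.
Proof.
move=> Hk sU Sk; have := Hk _ sU; rewrite cardsU1.
case: (u \in S) => /= h; first by move: Sk; rewrite ltnNge h.
by split => //; apply/eqP; rewrite eqn_leq h andbT.
Qed.

(* Either the
   smaller graph has no separator of size < k, and its linkage works, or a
   small separator S of it gives the minimum separators x |: S and y |: S;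
   one of them differs from A and B, or the edge xy itself links them. *)
Lemma menger_edge V e A B k x y : menger_below k (msr V e) ->
  symmetric e -> irreflexive e -> A \subset V -> B \subset V ->
  (forall S, sep V e A B S -> k <= #|S|) -> rV V e x y -> linkage V e A B k.
Proof.
move=> IH esym eirr AV BV Hk exy.
have xy : x != y by apply/eqP => Exy; move: exy; rewrite /rV Exy eirr !andbF.
case: (classic (exists S, sep V (del_edge e x y) A B S /\ #|S| < k)) => [[S0 [sS0 S0k]]|noS].
2: { have [A0 [P [A0A A0k hP dP]]] : linkage V (del_edge e x y) A B k.
       apply: IH => //; [exact: del_edge_msr | exact: del_edge_sym | exact: del_edge_irr |].
       by move=> S sS; rewrite leqNgt; apply/negP => Sk; apply: noS; exists S.
     exists A0, P; split => // a aA0; exact: ABpath_sub (@del_edge_sub e x y) (hP a aA0). }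
pose S := S0 :&: V.
have SV : S \subset V by apply: subsetIr.
have Sk : #|S| < k by apply: leq_ltn_trans (subset_leq_card (subsetIl S0 V)) S0k.
have sU u : (u == x) || (u == y) -> sep V e A B (u |: S).
  by move=> hu; apply: del_edge_sep hu (sep_restrict sS0).
have sX : sep V e A B (x |: S) by apply: sU; rewrite eqxx.
have sY : sep V e A B (y |: S) by apply: sU; rewrite eqxx orbT.
have [Xk xS] := tight_sep Hk sX Sk; have [Yk yS] := tight_sep Hk sY Sk.
have [xV yV _] := and3P exy.
case: (boolP ((x |: S != A) && (x |: S != B))) => [/andP[XA XB] | hX].
  by apply: (menger_split IH) sX XA XB => //; rewrite subUset sub1set xV.
case: (boolP ((y |: S != A) && (y |: S != B))) => [/andP[YA YB] | hY].
  by apply: (menger_split IH) sY YA YB => //; rewrite subUset sub1set yV.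
have XY : x |: S != y |: S.
  apply/eqP => E; have : x \in y |: S by rewrite -E setU11.
  by rewrite in_setU1 (negbTE xy) (negbTE xS).
move: hX hY; rewrite !negb_and !negbK => /orP[/eqP XA|/eqP XB] /orP[/eqP YA|/eqP YB].
- by rewrite XA YA eqxx in XY.
- exact: (edge_linkage exy xy xS yS XA YB Xk SV).
- by apply: (edge_linkage _ _ yS xS YA XB Yk SV); rewrite 1?rV_sym // eq_sym.
- by rewrite XB YB eqxx in XY.
Qed.

Lemma menger_below_all k n : menger_below k n.
Proof.
elim: n => // n IHn V e A B mn esym eirr AV BV Hk.
have IH : menger_below k (msr V e).
  by move=> V' e' A' B' h; apply: IHn; rewrite ltnS in mn; apply: leq_trans h mn.
case: (boolP [exists ab : T * T, rV V e ab.1 ab.2]) => [/existsP[[x y] /= exy]|noe].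
  exact: (menger_edge IH esym eirr AV BV Hk exy).
apply: menger_no_edge AV Hk => a b; apply: contraNN noe => h.
by apply/existsP; exists (a, b).
Qed.

Theorem menger V e A B k : symmetric e -> irreflexive e ->
  A \subset V -> B \subset V -> (forall S, sep V e A B S -> k <= #|S|) ->
  linkage V e A B k.
Proof. exact: (@menger_below_all k (msr V e).+1). Qed.

End Menger.

Section Consequences.
Variables (T : finType) (e : rel T) (k : nat).
Hypotheses (esym : symmetric e) (eirr : irreflexive e).
Hypothesis hconn : forall S : {set T}, #|S| < k ->
  forall x y, x \notin S -> y \notin S -> connect (delV e S) x y.

Lemma delV_path_notin (S : {set T}) x s : path (delV e S) x s -> x \notin S ->
  forall y, y \in x :: s -> y \notin S.
Proof.
elim: s x => [|z s IH] x /=; first by move=> _ xS y; rewrite mem_seq1 => /eqP->.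
move=> /andP[/and3P[_ zS _] pz] xS y; rewrite inE => /orP[/eqP->//|]; exact: IH.
Qed.

Lemma delV_path_rV S (V : {set T}) x s : path (delV e S) x s -> {subset x :: s <= V} ->
  path (rV V e) x s.
Proof.
elim: s x => [|z s IH] x //= /andP[/and3P[_ _ xz] pz] hV.
have zV : z \in V by apply: hV; apply/mem_tail/mem_head.
rewrite /rV hV ?mem_head // zV xz /=.
by apply: IH pz _ => y yin; apply: hV; apply: mem_tail.
Qed.

Lemma avoiding_path (S : {set T}) x y : #|S| < k -> x \notin S -> y \notin S ->
  exists s, [/\ path (delV e S) x s, last x s = y & uniq (x :: s)].
Proof.
move=> Sk xS yS; have /connectP[s ps ->] := hconn Sk xS yS.
by case: (shortenP ps) => s' ps' us' _; exists s'.
Qed.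

(* Two sets of equal size at most k cannot be separated by fewer vertices. *)
Lemma linkage_sets (M1 M2 : {set T}) : #|M1| = #|M2| -> #|M1| <= k ->
  linkage setT e M1 M2 #|M1|.
Proof.
move=> E12 M1k; apply: menger => //; try exact: subsetT.
move=> S sS; rewrite leqNgt; apply/negP => lt.
have [m1 m1M m1S] : exists2 m1, m1 \in M1 & m1 \notin S.
  by apply/subsetPn; apply: contraTN lt => /subset_leq_card; rewrite -leqNgt.
have [m2 m2M m2S] : exists2 m2, m2 \in M2 & m2 \notin S.
  by apply/subsetPn; apply: contraTN lt => /subset_leq_card; rewrite E12 -leqNgt.
have [s [ps ls us]] := avoiding_path (leq_trans lt M1k) m1S m2S.
have hp : ABpath setT e M1 M2 m1 s.
  apply/and5P; split; rewrite ?in_setT ?ls //.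
  by apply: (delV_path_rV ps) => y _; rewrite in_setT.
have [y yin yS] := sS m1 s hp.
by move: (delV_path_notin ps m1S yin); rewrite yS.
Qed.

Lemma linkage_between (M1 M2 : {set T}) : #|M1| = #|M2| -> #|M1| <= k ->
  exists (P : T -> seq T) (en : T -> T),
    (forall m, m \in M1 -> en m \in M2 /\ is_path e m (P m) (en m)) /\
    (forall m1 m2 x, m1 \in M1 -> m2 \in M1 -> m1 != m2 ->
       x \in m1 :: P m1 -> x \in m2 :: P m2 -> False).
Proof.
move=> E12 M1k; have [A0 [P [A0M A0k hP dP]]] := linkage_sets E12 M1k.
have A0E : A0 = M1 by apply/eqP; rewrite eqEcard A0M A0k leqnn.
subst A0; exists P, (lend P); split => // m mM.
have /and5P[_ _ pm lm um] := hP m mM; split => //.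
rewrite /is_path /lend um eqxx !andbT.
by apply: sub_path pm => a b /and3P[].
Qed.

(* A fan from u to M (u not in M) is a linkage from the neighbours of u to M
   in the graph without u: a separator S of fewer than |M| vertices would
   leave, after deleting S, a path from u to some vertex of M. *)
Lemma fan_linkage u (M : {set T}) : u \notin M -> #|M| <= k ->
  linkage (~: [set u]) e [set a | e u a] M #|M|.
Proof.
move=> uM Mk; apply: menger => //.
- by apply/subsetP => a; rewrite !inE; apply: contraTneq => ->; rewrite eirr.
- by apply/subsetP => m mM; rewrite !inE; apply: contraNneq uM => <-.
move=> S sS; rewrite leqNgt; apply/negP => lt.
have lt' : #|S :\ u| < #|M| by apply: leq_ltn_trans (subset_leq_card (subD1set S u)) lt.
have [m mM mS] : exists2 m, m \in M & m \notin S :\ u.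
  by apply/subsetPn; apply: contraTN lt' => /subset_leq_card; rewrite -leqNgt.
have uS : u \notin S :\ u by rewrite in_setD1 eqxx.
have [[|a s] [ps ls us]] := avoiding_path (leq_trans lt' Mk) uS mS.
  by move: mM; rewrite -ls (negbTE uM).
move: ps us => /= /andP[/and3P[_ aS ua] ps] /andP[unin uas].
have notu y : y \in a :: s -> y \in ~: [set u].
  by move=> yin; rewrite !inE; apply: contraNneq unin => <-.
have hp : ABpath (~: [set u]) e [set a | e u a] M a s.
  apply/and5P; split => //; first by rewrite inE.
  - exact: notu (mem_head _ _).
  - exact: (delV_path_rV ps notu).
  - by rewrite -[last a s]/(last u (a :: s)) ls.
have [y yin yS] := sS a s hp.
have : y \in S :\ u by rewrite in_setD1 yS andbT; move: (notu y yin); rewrite !inE.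
by rewrite (negbTE (delV_path_notin ps aS yin)).
Qed.

(* Paths from u to every m in M (u not in M) sharing only u: prefix u to the
   path of the fan linkage ending at m. *)
Lemma fan_avoiding u (M : {set T}) : u \notin M -> #|M| <= k ->
  exists P : T -> seq T,
    (forall m, m \in M -> is_path e u (P m) m) /\
    (forall m1 m2 x, m1 \in M -> m2 \in M -> m1 != m2 ->
       x \in u :: P m1 -> x \in u :: P m2 -> x = u).
Proof.
move=> uM Mk; have [A0 [P [A0A A0k hP dP]]] := fan_linkage uM Mk.
have enM a : a \in A0 -> lend P a \in M by move/hP/and5P => [].
have imM := lend_onto dP enM A0k.
pose Q m := if [pick a in A0 | lend P a == m] is Some a then a :: P a else [::].
have Qm m : m \in M -> exists2 a, a \in A0 & lend P a = m /\ Q m = a :: P a.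
  rewrite /Q; case: pickP => [a /andP[aA0 /eqP ea] _ | none]; first by exists a.
  by rewrite -imM => /imsetP[a aA0 ea]; move: (none a); rewrite aA0 ea eqxx.
exists Q; split=> [m mM | m1 m2 x m1M m2M ne].
  have [a aA0 [ea ->]] := Qm m mM.
  have /and5P[aN aV pa _ ua] := hP a aA0.
  apply/and3P; split.
  - rewrite /= (_ : e u a) /=; last by move: aN; rewrite inE.
    by apply: sub_path pa => x y /and3P[].
  - by rewrite /= -/(lend P a) ea.
  - rewrite cons_uniq ua andbT; apply/negP => uin.
    by move: (ABpath_in (hP a aA0) uin); rewrite !inE eqxx.
have [a1 a1A0 [e1 ->]] := Qm m1 m1M; have [a2 a2A0 [e2 ->]] := Qm m2 m2M.
have a12 : a1 != a2 by apply: contra ne => /eqP E; rewrite -e1 -e2 E.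
rewrite inE => /orP[/eqP->//|x1]; rewrite inE => /orP[/eqP->//|x2].
by exfalso; apply: (dP a1 a2 x a1A0 a2A0 a12 x1 x2).
Qed.

(* Part (b) of the main theorem: a fan from any vertex u to any M, |M| <= k;
   if u is in M, the path to u itself is trivial. *)
Lemma fan u (M : {set T}) : #|M| <= k ->
  exists P : T -> seq T,
    (forall m, m \in M -> is_path e u (P m) m) /\
    (forall m1 m2 x, m1 \in M -> m2 \in M -> m1 != m2 ->
       x \in u :: P m1 -> x \in u :: P m2 -> x = u).
Proof.
move=> Mk; case: (boolP (u \in M)) => uM; last exact: fan_avoiding.
have uM' : u \notin M :\ u by rewrite in_setD1 eqxx.
have M'k : #|M :\ u| <= k by apply: leq_trans (subset_leq_card (subD1set M u)) Mk.
have [Q [hQ dQ]] := fan_avoiding uM' M'k.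
exists (fun m => if m == u then [::] else Q m); split.
  move=> m mM; case: (eqVneq m u) => [->|mu]; first by rewrite /is_path /= eqxx.
  by apply: hQ; rewrite in_setD1 mu.
move=> m1 m2 x m1M m2M ne.
case: (eqVneq m1 u) => [_|m1u]; first by rewrite mem_seq1 => /eqP.
case: (eqVneq m2 u) => [_|m2u]; first by move=> _; rewrite mem_seq1 => /eqP.
by apply: dQ; rewrite ?in_setD1 ?m1u ?m2u.
Qed.

End Consequences.

Lemma disjoint_hits (T : finType) (S : {set T}) (gs : seq (seq T)) :
  uniq (flatten gs) -> all (has (fun y => y \in S)) gs -> size gs <= #|S|.
Proof.
elim: gs S => [|g gs IH] S //=; rewrite cat_uniq => /and3P[_ dis ugs].
move=> /andP[/hasP[y yg yS] hit]; rewrite (cardsD1 y S) yS add1n ltnS.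
apply: IH => //; apply/allP => g' g'gs; have /hasP[z zg' zS] := allP hit g' g'gs.
apply/hasP; exists z => //; rewrite in_setD1 zS andbT.
apply: contraNneq dis => Ezy; apply/hasP; exists y => //.
by apply/flattenP; exists g'; rewrite -?Ezy.
Qed.

Lemma path_step (T : eqType) (e : rel T) x y s : e x y -> path e y s -> path e x (y :: s).
Proof. by move=> h1 h2; rewrite /= h1 h2. Qed.

Lemma uniq_step (T : eqType) (x : T) s : x \notin s -> uniq s -> uniq (x :: s).
Proof. by move=> h1 h2; rewrite /= h1 h2. Qed.

Lemma notin_step (T : eqType) (x y : T) s : x != y -> x \notin s -> x \notin y :: s.
Proof. by move=> h1 h2; rewrite inE negb_or h1 h2. Qed.

(* Keep the adjacency of F_p folded; its instances are proved by the lemmas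
   adjUU, ... below. *)
Arguments Fadj : simpl never.

Section FiveConnected.
Variable p : nat.
Hypothesis hp : 3 <= p.

Local Notation adj := (@Fadj p).

Lemma p_gt0 : 0 < p. Proof. exact: leq_trans hp. Qed.
Lemma p2_gt0 : 0 < 2 * p. Proof. by rewrite muln_gt0 p_gt0. Qed.

(* The vertices u_i, v_j, w_j, z with natural indices read modulo the
   lengths p, 2p, 2p of the three cycles. *)
Definition U (i : nat) : Fvert p := uu (Ordinal (ltn_pmod i p_gt0)).
Definition Vv (j : nat) : Fvert p := vv (Ordinal (ltn_pmod j p2_gt0)).
Definition Ww (j : nat) : Fvert p := ww (Ordinal (ltn_pmod j p2_gt0)).
Definition Z : Fvert p := zz.

Lemma vert_cases (x : Fvert p) :
  [\/ exists i, x = U i, exists j, x = Vv j, exists j, x = Ww j | x = Z].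
Proof.
case: x => [[[i|j]|j]|[]]; last by constructor 4.
- by constructor 1; exists i; congr (uu _); apply: val_inj; rewrite /= modn_small.
- by constructor 2; exists j; congr (vv _); apply: val_inj; rewrite /= modn_small.
- by constructor 3; exists j; congr (ww _); apply: val_inj; rewrite /= modn_small.
Qed.

Lemma Fadj_sym : symmetric adj.
Proof. by move=> a b; rewrite /Fadj orbC. Qed.

(* No cycle of F_p has a loop, since all have length at least 2. *)
Lemma succ_mod_neq n i : i < n -> 1 < n -> (i == (i + 1) %% n) = false.
Proof.
move=> iN n1; case: (ltnP (i + 1) n) => h; first by rewrite modn_small //; lia.
have -> : i + 1 = n by lia.
by rewrite modnn; apply/eqP; lia.
Qed.

Lemma Fadj_irr : irreflexive adj.
Proof.
have h1 : 1 < p by apply: leq_trans hp.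
have h2 : 1 < 2 * p by lia.
by move=> [[[i|i]|i]|[]]; rewrite /Fadj /= ?orbb // succ_mod_neq.
Qed.

Lemma adjUU m n : (m + 1) %% p = n %% p -> adj (U m) (U n).
Proof. by move=> E; rewrite /Fadj /= modnDml E eqxx. Qed.
Lemma adjVV m n : (m + 1) %% (2 * p) = n %% (2 * p) -> adj (Vv m) (Vv n).
Proof. by move=> E; rewrite /Fadj /= modnDml E eqxx. Qed.
Lemma adjWW m n : (m + 1) %% (2 * p) = n %% (2 * p) -> adj (Ww m) (Ww n).
Proof. by move=> E; rewrite /Fadj /= modnDml E eqxx. Qed.
Lemma adjUV0 m n : (2 * m) %% (2 * p) = n %% (2 * p) -> adj (U m) (Vv n).
Proof. by move=> E; rewrite /Fadj /= muln_modr // modn_mod E eqxx !orbT. Qed.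
Lemma adjUV1 m n : (2 * m + 1) %% (2 * p) = n %% (2 * p) -> adj (U m) (Vv n).
Proof. by move=> E; rewrite /Fadj /= muln_modr // modnDml E eqxx !orbT. Qed.
Lemma adjUVm m n : (2 * m + (2 * p - 1)) %% (2 * p) = n %% (2 * p) -> adj (U m) (Vv n).
Proof. by move=> E; rewrite /Fadj /= muln_modr // -addnBA ?p2_gt0 // modnDml E eqxx. Qed.
Lemma adjVW0 m n : m %% (2 * p) = n %% (2 * p) -> adj (Vv m) (Ww n).
Proof. by move=> E; rewrite /Fadj /= E eqxx. Qed.
Lemma adjVW1 m n : (m + 1) %% (2 * p) = n %% (2 * p) -> adj (Vv m) (Ww n).
Proof. by move=> E; rewrite /Fadj /= modnDml E eqxx orbT. Qed.
Lemma adjWZ m : adj (Ww m) Z.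
Proof. by []. Qed.

Lemma Ueq m n : m %% p = n %% p -> U m = U n.
Proof. by move=> E; congr (uu _); apply: val_inj. Qed.
Lemma Veq m n : m %% (2 * p) = n %% (2 * p) -> Vv m = Vv n.
Proof. by move=> E; congr (vv _); apply: val_inj. Qed.
Lemma Weq m n : m %% (2 * p) = n %% (2 * p) -> Ww m = Ww n.
Proof. by move=> E; congr (ww _); apply: val_inj. Qed.

Lemma UneqU m n : m %% p != n %% p -> U m != U n.
Proof. by apply: contraNneq => -[->]. Qed.
Lemma VneqV m n : m %% (2 * p) != n %% (2 * p) -> Vv m != Vv n.
Proof. by apply: contraNneq => -[->]. Qed.
Lemma WneqW m n : m %% (2 * p) != n %% (2 * p) -> Ww m != Ww n.
Proof. by apply: contraNneq => -[->]. Qed.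

Lemma neq_off d j a b : a < d -> b < d -> a != b -> (j + a) %% d != (j + b) %% d.
Proof. by move=> ad bd ab; rewrite eqn_modDl !modn_small. Qed.

Lemma eqmod0 x y d : x = y -> x %% d = y %% d. Proof. by move=> ->. Qed.
Lemma eqmodL x y d : x = y + d -> x %% d = y %% d. Proof. by move=> ->; rewrite modnDr. Qed.
Lemma eqmodR x y d : x + d = y -> x %% d = y %% d. Proof. by move=> <-; rewrite modnDr. Qed.
Lemma eqmodL2 x y d : x = y + d + d -> x %% d = y %% d. Proof. by move=> ->; rewrite !modnDr. Qed.
Lemma eqmodR2 x y d : x + d + d = y -> x %% d = y %% d. Proof. by move=> <-; rewrite !modnDr. Qed.

(* Indices are written
   as a base plus an explicit offset, e.g. U (i + 1), Vv (j + (2 * p - 1));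
   adjacency and distinctness of such vertices then reduce, through the
   lemmas above, to linear arithmetic. *)
Ltac clean := repeat match goal with
  | H : is_true (has _ _) |- _ => clear H
  | H : is_true (_ \in _) |- _ => clear H
  | H : is_true (~~ (_ \in _)) |- _ => clear H
  | H : is_true (connect _ _ _) |- _ => clear H
  end.
Ltac lia' := clean; lia.
Ltac modtac := first [ apply: eqmod0; lia' | apply: eqmodL; lia' | apply: eqmodR; lia'
  | apply: eqmodL2; lia' | apply: eqmodR2; lia' ].
Ltac adjUVt := first [ apply: adjUV0; modtac | apply: adjUV1; modtac | apply: adjUVm; modtac ].
Ltac adjtac := match goal with
  | |- is_true (Fadj (U _) (U _)) =>
      first [ apply: adjUU; modtac | rewrite Fadj_sym; apply: adjUU; modtac ]
  | |- is_true (Fadj (Vv _) (Vv _)) =>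
      first [ apply: adjVV; modtac | rewrite Fadj_sym; apply: adjVV; modtac ]
  | |- is_true (Fadj (Ww _) (Ww _)) =>
      first [ apply: adjWW; modtac | rewrite Fadj_sym; apply: adjWW; modtac ]
  | |- is_true (Fadj (U _) (Vv _)) => adjUVt
  | |- is_true (Fadj (Vv _) (U _)) => rewrite Fadj_sym; adjUVt
  | |- is_true (Fadj (Vv _) (Ww _)) =>
      first [ apply: adjVW0; modtac | apply: adjVW1; modtac ]
  | |- is_true (Fadj (Ww _) (Vv _)) =>
      rewrite Fadj_sym; first [ apply: adjVW0; modtac | apply: adjVW1; modtac ]
  | |- is_true (Fadj (Ww _) Z) => apply: adjWZ
  | |- is_true (Fadj Z (Ww _)) => rewrite Fadj_sym; apply: adjWZ
  end.
Ltac neqtac := first [ done | assumption | rewrite eq_sym; assumption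
  | apply: UneqU; apply: neq_off; lia'
  | apply: VneqV; apply: neq_off; lia'
  | apply: WneqW; apply: neq_off; lia' ].
Ltac pathtac := repeat (apply: path_step; first adjtac); done.
Ltac notintac := repeat (apply: notin_step; first neqtac); done.
Ltac uniqtac := repeat (apply: uniq_step; first notintac); done.

(* Each v_j is v_{2i} or v_{2i+1} for the u_i adjacent to it. *)
Lemma half_cases (j : nat) : exists i, j = 2 * i \/ j = 2 * i + 1.
Proof. exists (j %/ 2); lia. Qed.

Section Deleted.
Variable S : {set Fvert p}.
Hypothesis HS : #|S| < 5.

Local Notation CN x y := (connect (delV adj S) x y).

Lemma CN_sym x y : CN x y = CN y x.
Proof. by apply: sym_connect_sym => a b; rewrite /delV Fadj_sym andbCA. Qed.

Lemma cstep x y : x \notin S -> y \notin S -> adj x y -> CN x y.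
Proof. by move=> xS yS xy; apply: connect1; rewrite /delV xS yS xy. Qed.

Lemma try_route x s t : x \notin S -> path adj x s ->
  (last x s \notin S -> CN (last x s) t) -> CN x t \/ has (fun y => y \in S) s.
Proof.
move=> xS ps cont; case: (boolP (has (fun y => y \in S) s)) => [h|h]; [by right | left].
have allS : all (fun y => y \notin S) (x :: s) by rewrite /= xS all_predC.
apply: connect_trans (cont _); last by apply: (allP allS); apply: mem_last.
apply/connectP; exists s => //.
elim: s x xS ps allS {h cont} => //= y s IH x xS /andP[xy ps] /and3P[_ yS al].
by rewrite /delV xS yS xy /= IH // /= yS.
Qed.

Lemma five_groups (g1 g2 g3 g4 g5 : seq (Fvert p)) :
  uniq (g1 ++ g2 ++ g3 ++ g4 ++ g5) ->
  has (fun y => y \in S) g1 -> has (fun y => y \in S) g2 -> has (fun y => y \in S) g3 ->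
  has (fun y => y \in S) g4 -> has (fun y => y \in S) g5 -> False.
Proof.
move=> u h1 h2 h3 h4 h5.
have := @disjoint_hits _ S [:: g1; g2; g3; g4; g5]; rewrite /= cats0 u h1 h2 h3 h4 h5.
by move=> /(_ isT isT); rewrite leqNgt HS.
Qed.

Ltac route h := apply: try_route => //; [pathtac | rewrite /=; apply: h].

(* If z survives, every surviving vertex reaches z: w_m directly, and v_j and
   u_i along five routes each which are disjoint apart from their start, so
   that one of them avoids S. *)
Lemma w_reaches_z (zS : Z \notin S) m : Ww m \notin S -> CN (Ww m) Z.
Proof. by move=> wS; apply: cstep => //; apply: adjWZ. Qed.

(* Routes from v_j: via w_j, w_{j+1}, v_{j+1}, v_{j-1}, and via its neighbour
   u_i on the outer cycle. *)
Lemma v_reaches_z (zS : Z \notin S) j : Vv j \notin S -> CN (Vv j) Z.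
Proof.
rewrite -[j]addn0 => vS; have cw := w_reaches_z zS.
have [//|h0] : CN (Vv (j + 0)) Z \/ has (fun y => y \in S) [:: Ww (j + 0)] by route cw.
have [//|h1] : CN (Vv (j + 0)) Z \/ has (fun y => y \in S) [:: Ww (j + 1)] by route cw.
have [//|h2] : CN (Vv (j + 0)) Z \/ has (fun y => y \in S) [:: Vv (j + 1); Ww (j + 2)].
  by route cw.
have [//|h3] : CN (Vv (j + 0)) Z \/
    has (fun y => y \in S) [:: Vv (j + (2 * p - 1)); Ww (j + (2 * p - 1))] by route cw.
have [i [Ej|Ej]] := half_cases j.
  have [//|h4] : CN (Vv (j + 0)) Z \/
      has (fun y => y \in S) [:: U (i + 0); U (i + 1); Vv (j + 3); Ww (j + 4)] by route cw.
  by exfalso; apply: (five_groups _ h0 h1 h2 h3 h4); uniqtac.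
have [//|h4] : CN (Vv (j + 0)) Z \/
    has (fun y => y \in S) [:: U (i + 1); Vv (j + 2); Ww (j + 3)] by route cw.
by exfalso; apply: (five_groups _ h0 h1 h2 h3 h4); uniqtac.
Qed.

(* Routes from u_i: via v_{2i-1}, v_{2i}, v_{2i+1}, u_{i+1} and u_{i-1}. *)
Lemma u_reaches_z (zS : Z \notin S) i : U i \notin S -> CN (U i) Z.
Proof.
rewrite -[i]addn0 => uS; have cv := v_reaches_z zS.
have [j Ej] : exists j, j = 2 * i by exists (2 * i).
have [//|h0] : CN (U (i + 0)) Z \/ has (fun y => y \in S) [:: Vv (j + (2 * p - 1))].
  by route cv.
have [//|h1] : CN (U (i + 0)) Z \/ has (fun y => y \in S) [:: Vv (j + 0)] by route cv.
have [//|h2] : CN (U (i + 0)) Z \/ has (fun y => y \in S) [:: Vv (j + 1)] by route cv.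
have [//|h3] : CN (U (i + 0)) Z \/ has (fun y => y \in S) [:: U (i + 1); Vv (j + 2)].
  by route cv.
have [//|h4] : CN (U (i + 0)) Z \/
    has (fun y => y \in S) [:: U (i + (p - 1)); Vv (j + (2 * p - 2))] by route cv.
by exfalso; apply: (five_groups _ h0 h1 h2 h3 h4); uniqtac.
Qed.

Lemma chain_connect (R : nat -> Fvert p) c n : (forall m, adj (R m) (R m.+1)) ->
  (forall t, t < n -> R (c + t) \notin S) -> forall t, t < n -> CN (R c) (R (c + t)).
Proof.
move=> adjR nS; elim=> [|t IH] tn; first by rewrite addn0 connect0.
apply: connect_trans (IH (ltnW tn)) _.
by apply: cstep; [exact: nS (ltnW tn) | exact: nS tn | rewrite addnS adjR].
Qed.

Lemma ring_full (R : nat -> Fvert p) : (forall m, adj (R m) (R m.+1)) ->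
  (forall m, R m \notin S) -> forall m, CN (R m) (R 0).
Proof.
move=> adjR nS m; rewrite CN_sym -[m]add0n.
by apply: (chain_connect (n := m.+1)) => // t _; apply: nS.
Qed.

(* A cycle R of length d meeting S in the single vertex R c stays connected:
   every surviving vertex lies on the arc R (c + 1), ..., R (c + d - 1). *)
Lemma ring_minus_one (R : nat -> Fvert p) d c : 1 < d ->
  (forall m, adj (R m) (R m.+1)) -> (forall x y, (R x == R y) = (x %% d == y %% d)) ->
  R c \in S -> (forall m, R m \in S -> R m = R c) ->
  forall m, R m \notin S -> CN (R m) (R (c %% d + 1)).
Proof.
move=> d1 adjR Req cS onlyc m mS.
have d0 : 0 < d by apply: ltnW.
have [c0d m0d] : c %% d < d /\ m %% d < d by rewrite !ltn_pmod.
have mc : m %% d != c %% d by rewrite -Req; apply: contraNneq mS => ->.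
have arc t : t < d.-1 -> R (c %% d + 1 + t) \notin S.
  move=> td; apply/negP => /onlyc /eqP; rewrite Req.
  case: (ltnP (c %% d + 1 + t) d) => h; first by rewrite modn_small //; lia.
  by rewrite -(subnK h) modnDr modn_small; lia.
rewrite CN_sym; case: (ltnP (c %% d) (m %% d)) => h.
  have -> : R m = R (c %% d + 1 + (m %% d - c %% d - 1)).
    apply/eqP; rewrite Req (_ : c %% d + 1 + _ = m %% d) ?modn_mod //; lia.
  by apply: (chain_connect (n := d.-1)) => //; lia.
have -> : R m = R (c %% d + 1 + (d - c %% d - 1 + m %% d)).
  apply/eqP; rewrite Req (_ : c %% d + 1 + _ = m %% d + d); first by rewrite modnDr modn_mod.
  by move: mc; rewrite neq_ltn => /orP[] ?; lia.
by apply: (chain_connect (n := d.-1)) => //; move: mc; rewrite neq_ltn => /orP[] ?; lia.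
Qed.

Lemma ring_dec (R : nat -> Fvert p) d : 0 < d -> (forall m, R m = R (m %% d)) ->
  (forall m, R m \notin S) \/ exists a, R a \in S.
Proof.
move=> d0 Rmod; case: (boolP [exists i : 'I_d, R i \in S]) => [/existsP[i iS]|none].
  by right; exists i.
left => m; rewrite Rmod; apply: contraNN none => mS; apply/existsP.
by exists (Ordinal (ltn_pmod m d0)).
Qed.

Lemma hub_all h : (forall i, U i \notin S -> CN (U i) h) ->
  (forall j, Vv j \notin S -> CN (Vv j) h) -> (forall j, Ww j \notin S -> CN (Ww j) h) ->
  (Z \notin S -> CN Z h) -> forall x, x \notin S -> CN x h.
Proof.
move=> hU hV hW hZ x.
by case: (vert_cases x) => [[i ->]|[j ->]|[j ->]|->]; [apply: hU | apply: hV | apply: hW |].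
Qed.

(* The five cases of the connectivity proof; in each a hub h is reached
   from every surviving vertex.  Case 1: z survives. *)
Lemma hub_Z : Z \notin S -> forall x, x \notin S -> CN x Z.
Proof.
move=> zS; apply: hub_all => [||| _]; last exact: connect0.
- exact: u_reaches_z.
- exact: v_reaches_z.
- exact: w_reaches_z.
Qed.

(* Case 2: z is deleted but the outer cycle survives; every v_j has a
   neighbour on it, and every w_m reaches some v_j along one of four disjoint
   routes (z being the fifth deleted vertex). *)
Lemma hub_U : Z \in S -> (forall m, U m \notin S) -> forall x, x \notin S -> CN x (U 0).
Proof.
move=> zS nU; have Zg : has (fun y => y \in S) [:: Z] by rewrite /= zS.
have hu : forall m, CN (U m) (U 0) by apply: ring_full => // m; adjtac.
have hv j : Vv j \notin S -> CN (Vv j) (U 0).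
  move=> vS; have [i [Ej|Ej]] := half_cases j;
    by apply: connect_trans (hu i); apply: cstep; rewrite ?nU //; adjtac.
apply: hub_all => //; last by rewrite zS.
move=> m; rewrite -[m]addn0 => wS.
have [//|h1] : CN (Ww (m + 0)) (U 0) \/ has (fun y => y \in S) [:: Vv (m + 0)] by route hv.
have [//|h2] : CN (Ww (m + 0)) (U 0) \/ has (fun y => y \in S) [:: Vv (m + (2 * p - 1))].
  by route hv.
have [//|h3] : CN (Ww (m + 0)) (U 0) \/ has (fun y => y \in S) [:: Ww (m + 1); Vv (m + 1)].
  by route hv.
have [//|h4] : CN (Ww (m + 0)) (U 0) \/
    has (fun y => y \in S) [:: Ww (m + (2 * p - 1)); Vv (m + (2 * p - 2))] by route hv.
by exfalso; apply: (five_groups _ Zg h1 h2 h3 h4); uniqtac.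
Qed.

(* Case 3: z is deleted but the cycle C' survives; every u_i and w_m
   has a neighbour on it. *)
Lemma hub_V : Z \in S -> (forall m, Vv m \notin S) -> forall x, x \notin S -> CN x (Vv 0).
Proof.
move=> zS nV; have hv : forall m, CN (Vv m) (Vv 0) by apply: ring_full => // m; adjtac.
apply: hub_all => //; last by rewrite zS.
- by move=> i uS; apply: connect_trans (hv (2 * i)); apply: cstep; rewrite ?nV //; adjtac.
- by move=> j wS; apply: connect_trans (hv j); apply: cstep; rewrite ?nV //; adjtac.
Qed.

(* Case 4: z and some u_a are deleted but the cycle C'' survives; every v_j
   has a neighbour on it, and every u_i one of three neighbours v_j. *)
Lemma hub_W a : Z \in S -> U a \in S -> (forall m, Ww m \notin S) ->
  forall x, x \notin S -> CN x (Ww 0).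
Proof.
move=> zS aS nW; have Zg : has (fun y => y \in S) [:: Z] by rewrite /= zS.
have Ug : has (fun y => y \in S) [:: U a] by rewrite /= aS.
have hw : forall m, CN (Ww m) (Ww 0) by apply: ring_full => // m; adjtac.
have hv j : Vv j \notin S -> CN (Vv j) (Ww 0).
  by move=> vS; apply: connect_trans (hw j); apply: cstep; rewrite ?nW //; adjtac.
apply: hub_all => //; last by rewrite zS.
move=> i; rewrite -[i]addn0 => uS; have [j Ej] : exists j, j = 2 * i by exists (2 * i).
have [//|h1] : CN (U (i + 0)) (Ww 0) \/ has (fun y => y \in S) [:: Vv (j + 0)] by route hv.
have [//|h2] : CN (U (i + 0)) (Ww 0) \/ has (fun y => y \in S) [:: Vv (j + 1)] by route hv.
have [//|h3] : CN (U (i + 0)) (Ww 0) \/ has (fun y => y \in S) [:: Vv (j + (2 * p - 1))].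
  by route hv.
by exfalso; apply: (five_groups _ Zg Ug h1 h2 h3); uniqtac.
Qed.

Lemma one_survives (R : nat -> Fvert p) c m n : (forall k, R k \in S -> R k = R c) ->
  R m != R n -> R m \notin S \/ R n \notin S.
Proof.
move=> only ne; case: (boolP (R m \in S)) => mS; [right | by left].
by apply: contra ne => /only ->; rewrite (only _ mS).
Qed.

(* Case 5: S consists of z, one u_a, one v_b and one w_c.  The cycle C''
   minus w_c is connected, every v_j has two neighbours on C'' and every u_i
   two neighbours on C', and only one of them may be deleted. *)
Lemma hub_W1 a b c : Z \in S -> U a \in S -> Vv b \in S -> Ww c \in S ->
  forall x, x \notin S -> CN x (Ww (c %% (2 * p) + 1)).
Proof.
move=> zS aS bS cS.
have only4 y : y \in S -> ~~ uniq [:: Z; U a; Vv b; Ww c; y].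
  move=> yS; apply/negP => u.
  apply: (@five_groups [:: Z] [:: U a] [:: Vv b] [:: Ww c] [:: y]);
    by rewrite //= ?zS ?aS ?bS ?cS ?yS.
have onlyW m : Ww m \in S -> Ww m = Ww c.
  by move=> mS; apply/eqP; apply: contraNT (only4 _ mS) => ne; uniqtac.
have onlyV m : Vv m \in S -> Vv m = Vv b.
  by move=> mS; apply/eqP; apply: contraNT (only4 _ mS) => ne; uniqtac.
have hw : forall m, Ww m \notin S -> CN (Ww m) (Ww (c %% (2 * p) + 1)).
  apply: ring_minus_one => //; first by have := p2_gt0; lia.
  by move=> m; adjtac.
have hv j : Vv j \notin S -> CN (Vv j) (Ww (c %% (2 * p) + 1)).
  rewrite -[j]addn0 => vS.
  have [w|w] := @one_survives Ww c (j + 0) (j + 1) onlyW ltac:(neqtac);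
    by apply: connect_trans (hw _ w); apply: cstep => //; adjtac.
apply: hub_all => //; last by rewrite zS.
move=> i uS; have [j Ej] : exists j, j = 2 * i by exists (2 * i).
have [v|v] := @one_survives Vv b (j + 0) (j + 1) onlyV ltac:(neqtac);
  by apply: connect_trans (hv _ v); apply: cstep => //; adjtac.
Qed.

Lemma conn_hub : exists h, forall x, x \notin S -> CN x h.
Proof.
have Umod m : U m = U (m %% p) by apply: Ueq; rewrite modn_mod.
have Vmod m : Vv m = Vv (m %% (2 * p)) by apply: Veq; rewrite modn_mod.
have Wmod m : Ww m = Ww (m %% (2 * p)) by apply: Weq; rewrite modn_mod.
case: (boolP (Z \in S)) => zS; last by exists Z; apply: hub_Z.
case: (ring_dec p_gt0 Umod) => [nU|[a aS]]; first by exists (U 0); apply: hub_U.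
case: (ring_dec p2_gt0 Vmod) => [nV|[b bS]]; first by exists (Vv 0); apply: hub_V.
case: (ring_dec p2_gt0 Wmod) => [nW|[c cS]]; first by exists (Ww 0); apply: hub_W aS nW.
by exists (Ww (c %% (2 * p) + 1)); apply: hub_W1 aS bS cS.
Qed.

End Deleted.

Theorem Fp_five_connected : k_connected adj 5.
Proof.
split; first by rewrite /Fvert !card_sum card_unit !card_ord; lia.
move=> S HS x y xS yS; have [h Hh] := conn_hub HS.
by apply: connect_trans (Hh x xS) _; rewrite CN_sym; apply: Hh.
Qed.

End FiveConnected.

Theorem mainTheorem4 (p : nat) (hp : 3 <= p) :
  (* (a) *)
  k_connected (@Fadj p) 5 /\
  (* (b) fan from any vertex u to any M ⊆ V(C), |M| <= 5 *)
  (forall (u : Fvert p) (M : {set Fvert p}),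
     M \subset [set x | onC x] -> #|M| <= 5 ->
     exists P : Fvert p -> seq (Fvert p),
       (forall m, m \in M -> is_path (@Fadj p) u (P m) m) /\
       (forall m1 m2 x, m1 \in M -> m2 \in M -> m1 != m2 ->
          x \in u :: P m1 -> x \in u :: P m2 -> x = u)) /\
  (* (c) linkage between M1, M2 ⊆ V(C), |M1| = |M2| <= 5 *)
  (forall M1 M2 : {set Fvert p},
     M1 \subset [set x | onC x] -> M2 \subset [set x | onC x] ->
     #|M1| = #|M2| -> #|M1| <= 5 ->
     exists (P : Fvert p -> seq (Fvert p)) (en : Fvert p -> Fvert p),
       (forall m, m \in M1 -> en m \in M2 /\ is_path (@Fadj p) m (P m) (en m)) /\
       (forall m1 m2 x, m1 \in M1 -> m2 \in M1 -> m1 != m2 ->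
          x \in m1 :: P m1 -> x \in m2 :: P m2 -> False)).
Proof.
have conn5 := (Fp_five_connected hp).2.
split; first exact: Fp_five_connected.
split=> [u M _ M5 | M1 M2 _ _ E12 M5].
- exact: (fan (@Fadj_sym p) (Fadj_irr hp) conn5 u M5).
- exact: (linkage_between (@Fadj_sym p) (Fadj_irr hp) conn5 E12 M5).
Qed.
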